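(* Let $\mathbb L$ be a tropical Lagrangian multi-section over a complete fan $\Sigma$, let $\tau\in\Sigma$ with a chosen splitting $\iota_\tau$, and let $\tau'$ be a lift of $\tau$. If $\mathbb L$ is separable, then its localization $\mathbb L_{\tau'}$ along $\tau'$ is also separable.
   Context: $N$ is a lattice, $M=N^*$, $\Sigma$ a complete fan in $N_{\mathbb R}$. A tropical Lagrangian multi-section over $\Sigma$ is $\mathbb L=(L,\Sigma',\mu,\pi,\varphi)$: a cone complex $\Sigma'$ with support $L$, a surjective map $\pi:L\to|\Sigma|$ mapping each cone $\sigma'\in\Sigma'$ isomorphically onto a cone of $\Sigma$, multiplicities $\mu:\Sigma'\to\mathbb Z_{>0}$ with constant total multiplicity over each point, and a continuous $\varphi$ on $L$ linear on each maximal cone $\sigma'$ with slope $m(\sigma')\in M$. $\mathbb L$ is separable if for every $\tau\in\Sigma$ and distinct lifts $\tau^{(\alpha)}\ne\tau^{(\beta)}$ of $\tau$ in $\Sigma'$, $\varphi|_{\tau^{(\alpha)}}\ne\varphi|_{\tau^{(\beta)}}$ (as functions on $\tau$ via $\pi$). Localization: for $\tau\in\Sigma$, $N_\tau=N/(\mathbb R\tau\cap N)$, $p_\tau:N\to N_\tau$, $M_\tau=\tau^\perp\cap M$, a splitting $\iota_\tau$ of $p_\tau$ with dual $\iota_\tau^*:M\to M_\tau$, quotient fan $\Sigma_\tau$ with cones $K_\tau(\sigma)=p_\tau(\sigma)$, $\sigma\supset\tau$; for a lift $\tau'$ of $\tau$, $\mathbb L_{\tau'}$ is the tropical Lagrangian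 multi-section over $\Sigma_\tau$ with cones $K_\tau(\sigma)\times\{\iota_\tau^*m(\sigma')\}$ for cones $\sigma'\supset\tau'$ over $\sigma$, glued along common faces over $\Sigma_\tau$, multiplicity $\mu(\sigma')$, and piecewise linear function of slope $\iota_\tau^*m(\sigma')$ on the cone indexed by $\sigma'$. *)

From HB Require Import structures.
From mathcomp Require Import all_boot all_order all_algebra.
From mathcomp Require Import boolp classical_sets reals.

Set Implicit Arguments.
Unset Strict Implicit.
Unset Printing Implicit Defensive.

Import Order.TTheory GRing.Theory Num.Theory.
Local Open Scope ring_scope.
Local Open Scope classical_set_scope.

(* Conventions:  N = Z^n (row vectors 'rV[int]_n),  N_R = R^n ('rV[R]_n),
   M = Z^n (row vectors 'rV[int]_n) with the pairing <m, x> = sum_i m_i x_i. *)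

Section Cones.
Variables (R : realType) (n : nat).

Definition vR (v : 'rV[int]_n) : 'rV[R]_n := map_mx intr v.

Definition dpair (u : 'rV[int]_n) (x : 'rV[R]_n) : R :=
  \sum_(i < n) (u 0 i)%:~R * x 0 i.

Definition rdpair (u x : 'rV[R]_n) : R := \sum_(i < n) u 0 i * x 0 i.

Definition cone_gen (g : seq 'rV[int]_n) : set 'rV[R]_n :=
  [set x | exists c : 'I_(size g) -> R,
           (forall i, 0 <= c i) /\ x = \sum_(i < size g) c i *: vR g`_i].

Definition rat_poly_cone (s : set 'rV[R]_n) := exists g, s = cone_gen g.

Definition strongly_convex (s : set 'rV[R]_n) :=
  forall x, s x -> s (- x) -> x = 0.

Definition face_of (t s : set 'rV[R]_n) :=
  exists u : 'rV[R]_n, (forall x, s x -> 0 <= rdpair u x) /\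
                       t = [set x | s x /\ rdpair u x = 0].

Definition relint (s : set 'rV[R]_n) : set 'rV[R]_n :=
  [set x | s x /\ forall t, face_of t s -> t x -> t = s].

Definition is_fan (I : finType) (S : I -> set 'rV[R]_n) :=
  [/\ injective S,
      (forall i, rat_poly_cone (S i) /\ strongly_convex (S i)),
      (forall i t, face_of t (S i) -> exists j, S j = t) &
      (forall i j, face_of (S i `&` S j) (S i) /\ face_of (S i `&` S j) (S j))].

Definition complete_fan (I : finType) (S : I -> set 'rV[R]_n) :=
  is_fan S /\ forall x, exists i, S i x.

End Cones.

(* The cone complex Sigma' is given combinatorially: a finite type of cones,
   the map pi sending each cone sigma' to (the index of) the cone pi(sigma')
   of Sigma with which it is identified, and the face relation of Sigma'
   ([tl_face a b] : a is a face of b).  The support L is the union of the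
   cones S (pi a) glued along common faces.  The function varphi is given
   cone-wise: [tl_phi a] is varphi restricted to the cone a, viewed on
   S (pi a) via pi.  [tl_slope a] is the slope m(a) (relevant for maximal a). *)
Record tlms_data (I : finType) (R : realType) (n : nat) := TLMSData {
  tl_cone : finType;
  tl_pi : tl_cone -> I;
  tl_face : rel tl_cone;
  tl_mu : tl_cone -> nat;
  tl_slope : tl_cone -> 'rV[int]_n;
  tl_phi : tl_cone -> 'rV[R]_n -> R }.

Arguments tl_pi {I R n} _ _.
Arguments tl_face {I R n} _ _ _.
Arguments tl_mu {I R n} _ _.
Arguments tl_slope {I R n} _ _.
Arguments tl_phi {I R n} _ _ _.

Section TLMS.
Variables (R : realType) (n : nat) (I : finType) (S : I -> set 'rV[R]_n).
Variable L : tlms_data I R n.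

Definition tl_maximal (a : tl_cone L) : bool :=
  [forall d, tl_face L a d ==> (d == a)].

Definition is_tlms :=
  [/\
      [/\ reflexive (tl_face L), antisymmetric (tl_face L) & transitive (tl_face L)],
      (* ... each cone a is mapped isomorphically onto the cone S (pi a),
         faces going to faces, bijectively on faces *)
      (forall a b, tl_face L a b -> face_of (S (tl_pi L a)) (S (tl_pi L b))),
      (forall b t, face_of t (S (tl_pi L b)) ->
          exists! a, tl_face L a b /\ S (tl_pi L a) = t),
      (* ... and two cones meet along a common face *)
      (forall a b e, tl_face L e a -> tl_face L e b ->
          exists g, [/\ tl_face L g a, tl_face L g b &
                        forall e', tl_face L e' a -> tl_face L e' b -> tl_face L e' g]) &
   [/\ (* pi : L -> |Sigma| is surjective *)
      (forall x, exists a, S (tl_pi L a) x),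
      (forall a, (0 < tl_mu L a)%N),
      (* constant total multiplicity over each point x : the points of L
         over x correspond to the cones a with x in relint (S (pi a)) *)
      (exists r : nat, forall x,
          (\sum_(a : tl_cone L | `[< relint (S (tl_pi L a)) x >]) tl_mu L a)%N = r),
      (* varphi is a well-defined continuous function on L *)
      (forall e a x, tl_face L e a -> S (tl_pi L e) x ->
          tl_phi L e x = tl_phi L a x) &
      (forall a x, tl_maximal a -> S (tl_pi L a) x ->
          tl_phi L a x = dpair (tl_slope L a) x)]].

Definition separable :=
  forall a b : tl_cone L, tl_pi L a = tl_pi L b -> a != b ->
    exists x, S (tl_pi L a) x /\ tl_phi L a x != tl_phi L b x.

End TLMS.

Section Localization.
Variables (R : realType) (n : nat) (I : finType) (S : I -> set 'rV[R]_n).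
Variable (t : I).

(* A presentation of N_tau = N / (R tau ∩ N) as Z^k: the projection
   p_tau : N -> N_tau is x |-> x *m p, with kernel exactly the lattice points
   of the linear span R tau = tau - tau; iota is a splitting (p o iota = id),
   x |-> x *m iota.  Its dual iota^* : M -> M_tau is m |-> m *m iota^T. *)
Definition quotient_presentation (k : nat) (p : 'M[int]_(n, k))
    (iota : 'M[int]_(k, n)) :=
  (forall x : 'rV[int]_n,
      x *m p = 0 <-> exists a b, [/\ S t a, S t b & vR R x = a - b]) /\
  iota *m p = 1%:M.

(* cones of Sigma containing tau: index set of the quotient fan Sigma_tau *)
Definition star_idx := {j : I | `[< face_of (S t) (S j) >]}.

Definition quot_fan (k : nat) (p : 'M[int]_(n, k)) : star_idx -> set 'rV[R]_k :=
  fun j => (fun x : 'rV[R]_n => x *m map_mx intr p) @` S (val j).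

Variables (L : tlms_data I R n) (k : nat) (p : 'M[int]_(n, k))
          (iota : 'M[int]_(k, n)) (tau' : tl_cone L).

(* cones sigma' of Sigma' containing tau' (the second conjunct is implied
   by the cone-complex axioms; it is included so that pi lands in Sigma_tau) *)
Definition loc_cone_pred (a : tl_cone L) : bool :=
  tl_face L tau' a && `[< face_of (S t) (S (tl_pi L a)) >].

Definition loc_cone := {a : tl_cone L | loc_cone_pred a}.

Lemma loc_cone_star (a : loc_cone) : `[< face_of (S t) (S (tl_pi L (val a))) >].
Proof. by case/andP: (valP a). Qed.

Definition loc_pi (a : loc_cone) : star_idx :=
  exist _ (tl_pi L (val a)) (loc_cone_star a).

Definition loc_face : rel loc_cone := fun a b => tl_face L (val a) (val b).

Definition loc_mu (a : loc_cone) : nat := tl_mu L (val a).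

Definition loc_slope (a : loc_cone) : 'rV[int]_k := tl_slope L (val a) *m iota^T.

Definition loc_maximal (a : loc_cone) : bool :=
  [forall d, loc_face a d ==> (d == a)].

(* the piecewise linear function of L_tau': on the cone indexed by a it is
   the linear function of slope iota^* m(e) for a maximal cone e containing a
   (any choice gives the same function on the cone, by continuity) *)
Definition loc_phi (a : loc_cone) (y : 'rV[R]_k) : R :=
  if [pick e | loc_face a e && loc_maximal e] is Some e
  then dpair (loc_slope e) y else 0.

Definition localization : tlms_data star_idx R k :=
  @TLMSData star_idx R k loc_cone loc_pi loc_face loc_mu loc_slope loc_phi.

End Localization.

(* Let a != b be two lifts of the same cone sigma of Sigma_tau, i.e. two cones of
   Sigma' over sigma containing tau'.  Separability of L gives x in sigma where
   varphi_a(x) != varphi_b(x).  On a and b, varphi is linear with the slopes m_a,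
   m_b of maximal cones above them; both slopes restrict to varphi_tau' on tau,
   so m_a - m_b vanishes on the span of tau, which contains x - iota_tau(p_tau x)
   because iota_tau splits p_tau.  Hence the localized functions, of slopes
   iota_tau^* m_a and iota_tau^* m_b, already differ at p_tau(x). *)

From HB Require Import structures.
From mathcomp Require Import all_boot all_order all_algebra.
From mathcomp Require Import boolp classical_sets reals.

Set Implicit Arguments.
Unset Strict Implicit.
Unset Printing Implicit Defensive.

Import GRing.Theory Num.Theory.
Local Open Scope ring_scope.
Local Open Scope classical_set_scope.

Section Pairing.
Variables (R : realType) (n : nat).
Implicit Types (m : 'rV[int]_n) (x y : 'rV[R]_n).

Lemma dpairE q (m : 'rV[int]_q) (x : 'rV[R]_q) : dpair m x = (vR R m *m x^T) 0 0.
Proof. by rewrite /dpair mxE; apply: eq_bigr => i _; rewrite !mxE. Qed.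

Lemma dpairB m x y : dpair m (x - y) = dpair m x - dpair m y.
Proof. by rewrite /dpair -sumrB; apply: eq_bigr => i _; rewrite !mxE mulrBr. Qed.

Lemma dpair_vR m (v : 'rV[int]_n) : dpair m (vR R v) = ((m *m v^T) 0 0)%:~R.
Proof.
rewrite /dpair !mxE rmorph_sum; apply: eq_bigr => i _.
by rewrite !mxE rmorphM.
Qed.

Lemma dpair_mulmx_tr k m (A : 'M[int]_(k, n)) (y : 'rV[R]_k) :
  dpair (m *m A^T) y = dpair m (y *m map_mx intr A).
Proof. by rewrite !dpairE /vR map_mxM !trmx_mul map_trmx mulmxA. Qed.

Lemma eq_dpair_mulmx m1 m2 (Z : 'M[int]_n) x :
  (forall j, dpair m1 (vR R (row j Z)) = dpair m2 (vR R (row j Z))) ->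
  dpair m1 (x *m map_mx intr Z) = dpair m2 (x *m map_mx intr Z).
Proof.
move=> eq_rows; rewrite -!dpair_mulmx_tr; congr dpair; apply/rowP => j.
have row_entry m : (m *m (row j Z)^T) 0 0 = (m *m Z^T) 0 j.
  by rewrite !mxE; apply: eq_bigr => i _; rewrite !mxE.
by move: (eq_rows j); rewrite !dpair_vR !row_entry => /intr_inj.
Qed.

End Pairing.

Lemma face_of_sub (R : realType) n (t s : set 'rV[R]_n) : face_of t s -> t `<=` s.
Proof. by case=> u [_ ->] x []. Qed.

Lemma exists_maximal_above (T : finType) (r : rel T) :
  reflexive r -> antisymmetric r -> transitive r ->
  forall x, exists y, r x y && [forall z, r y z ==> (z == y)].
Proof.
move=> r_refl r_anti r_trans x.
have [y rxy y_max] := arg_maxnP (fun y => #|[pred z | r z y]|) (r_refl x).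
exists y; rewrite rxy /=; apply/forallP => z; apply/implyP => ryz.
apply/eqP/r_anti; rewrite ryz andbT; apply: contraT => rzy_false.
have : (#|[pred w | r w y]| < #|[pred w | r w z]|)%N.
  apply: proper_card; apply/fintype.properP; split.
    by apply/fintype.subsetP => w; rewrite !inE => /r_trans; apply.
  by exists z; rewrite !inE ?r_refl.
by rewrite ltnNge => /negP[]; apply: y_max; apply: r_trans ryz.
Qed.

Section MaximalSlopes.
Variables (R : realType) (n : nat) (I : finType) (S : I -> set 'rV[R]_n).
Variable L : tlms_data I R n.
Hypothesis L_tlms : is_tlms S L.

Lemma tl_phi_maximal_face c e x :
  tl_face L c e -> tl_maximal e -> S (tl_pi L c) x ->
  tl_phi L c x = dpair (tl_slope L e) x.
Proof.
case: L_tlms => _ face_pi _ _ [_ _ _ phi_glue phi_lin] ce e_max cx.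
rewrite (phi_glue _ _ _ ce cx) phi_lin //.
exact: face_of_sub (face_pi _ _ ce) _ cx.
Qed.

End MaximalSlopes.

Section LocalizedSlopes.
Variables (R : realType) (n : nat) (I : finType) (S : I -> set 'rV[R]_n).
Variables (L : tlms_data I R n) (t : I) (k : nat) (p : 'M[int]_(n, k))
          (iota : 'M[int]_(k, n)) (tau' : tl_cone L).
Hypotheses (L_tlms : is_tlms S L) (pres : quotient_presentation S t p iota)
           (tau'_over_t : tl_pi L tau' = t).

Local Notation loc_cone := (loc_cone S t tau').

Lemma loc_maximal_tl_maximal (e : loc_cone) : loc_maximal e -> tl_maximal (val e).
Proof.
case: L_tlms => [[_ _ face_trans] face_pi _ _ _] e_max.
apply/forallP => d; apply/implyP => ed.
have tau'd := face_trans _ _ _ (andP (valP e)).1 ed.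
have d_loc : loc_cone_pred S t tau' d.
  by rewrite /loc_cone_pred tau'd; apply/asboolP; rewrite -tau'_over_t; apply: face_pi.
by move/forallP: e_max => /(_ (exist _ d d_loc)) /implyP /(_ ed) /eqP <-.
Qed.

Lemma loc_phiE (c : loc_cone) : exists e : loc_cone,
  [/\ tl_face L (val c) (val e), tl_maximal (val e) &
      forall y, loc_phi iota c y = dpair (loc_slope iota e) y].
Proof.
case: L_tlms => [[face_refl face_anti face_trans] _ _ _ _].
rewrite /loc_phi; case: pickP => [e /andP[ce e_max] | no_max].
  by exists e; split=> //; apply: loc_maximal_tl_maximal.
have [e] := @exists_maximal_above _ (@loc_face _ _ _ S t L tau')
  (fun a => face_refl _) (fun a b ab => val_inj (face_anti _ _ ab))
  (fun a b c => face_trans _ _ _) c.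
by rewrite no_max.
Qed.

Lemma loc_slope_on_tau (e : loc_cone) z : tl_maximal (val e) -> S t z ->
  dpair (tl_slope L (val e)) z = tl_phi L tau' z.
Proof.
move=> e_max tz; symmetry.
by apply: (tl_phi_maximal_face L_tlms (andP (valP e)).1 e_max); rewrite tau'_over_t.
Qed.

(* The rows of [1 - p iota] lie in the kernel of [p] because [iota] splits [p];
   that kernel is the lattice span of tau. *)
Lemma eq_dpair_off_section (m1 m2 : 'rV[int]_n) (x : 'rV[R]_n) :
  (forall z, S t z -> dpair m1 z = dpair m2 z) ->
  dpair m1 (x - x *m map_mx intr p *m map_mx intr iota) =
  dpair m2 (x - x *m map_mx intr p *m map_mx intr iota).
Proof.
case: pres => kerP splitP eq_tau.
have -> : x - x *m map_mx intr p *m map_mx intr iota =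
          x *m map_mx intr (1%:M - p *m iota).
  by rewrite map_mxB map_mxM map_mx1 mulmxBr mulmx1 mulmxA.
apply: eq_dpair_mulmx => j.
have : row j (1%:M - p *m iota) *m p = 0.
  by rewrite -row_mul mulmxBl mul1mx -mulmxA splitP mulmx1 subrr row0.
by case/kerP => a [b [ta tb ->]]; rewrite !dpairB !eq_tau.
Qed.

End LocalizedSlopes.

Theorem propositionB3 (R : realType) (n : nat) (I : finType)
    (S : I -> classical_sets.set 'rV[R]_n) (L : tlms_data I R n)
    (t : I) (k : nat) (p : 'M[int]_(n, k)) (iota : 'M[int]_(k, n))
    (tau' : tl_cone L) :
  complete_fan S ->
  is_tlms S L ->
  quotient_presentation S t p iota ->
  tl_pi L tau' = t ->
  separable S L ->
  separable (@quot_fan R n I S t k p) (@localization R n I S t L k iota tau').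
Proof.
move=> _ L_tlms pres tau'_over_t L_sep a b ab a_neq_b.
have pi_ab : tl_pi L (val a) = tl_pi L (val b) by move: ab => /(congr1 val).
have [x [ax phi_neq]] := L_sep _ _ pi_ab a_neq_b.
exists (x *m map_mx intr p); split; first by exists x.
have [ea [a_ea ea_max loc_a]] := loc_phiE iota L_tlms tau'_over_t a.
have [eb [b_eb eb_max loc_b]] := loc_phiE iota L_tlms tau'_over_t b.
have bx : S (tl_pi L (val b)) x by rewrite -pi_ab.
rewrite (tl_phi_maximal_face L_tlms a_ea ea_max ax) in phi_neq.
rewrite (tl_phi_maximal_face L_tlms b_eb eb_max bx) in phi_neq.
have slopes_on_tau z : S t z ->
    dpair (tl_slope L (val ea)) z = dpair (tl_slope L (val eb)) z.
  by move=> tz; rewrite !(loc_slope_on_tau L_tlms tau'_over_t _ tz).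
have := eq_dpair_off_section pres x slopes_on_tau; rewrite !dpairB => off_tau.
rewrite /= loc_a loc_b !dpair_mulmx_tr.
by apply: contra_neq phi_neq => eq_loc; move: off_tau; rewrite eq_loc => /addIr.
Qed.
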